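(* Let $m\in\{1,2\}$ and $\gamma\in(\gamma_1,3]$. Then for every $z\in(0,z_2]$ one has $C(V_1;\gamma,z,P_8)>C_1$. Consequently any $z\in(0,z_M]$ with $C(V_1;\gamma,z,P_8)=C_1$ lies in $(z_2,z_M]$.
   Context: Fix $m\in\{1,2\}$. For $z>0$ put $\lambda=1+m\gamma z$, $a_1=1+\frac{m(\gamma-1)}{2}$, $a_2=\frac{m(\gamma-1)+mz\gamma(\gamma-3)}{2}$, $a_3=\frac{mz\gamma(\gamma-1)}{2}$, $G(V,C;\gamma,z)=C^2[(m+1)V+2mz]-V(1+V)(\lambda+V)$, $F(V,C;\gamma,z)=C\{C^2[1+\frac{mz}{1+V}]-a_1(1+V)^2+a_2(1+V)-a_3\}$; ODE $\frac{dC}{dV}=\frac FG$. $V_1=-\frac2{\gamma+1}$, $C_1=\frac{\sqrt{2\gamma(\gamma-1)}}{\gamma+1}$. $z_M=(\sqrt\gamma+\sqrt2)^{-2}$; $w(z)=\sqrt{1-2(\gamma+2)z+(\gamma-2)^2z^2}$, $V_8=\frac{-1+(\gamma-2)z+w}{2}$, $C_8=1+V_8$, $P_8=(V_8,C_8)$. $z_2=\frac{\sqrt{33}-3}{6+2\sqrt{33}+4\gamma}$ (the value with $C_8=\sqrt{-\frac32V_8}$). $\gamma_1=1+\sqrt2$. For $z\in(0,z_M]$, $C(\cdot;\gamma,z,P_8):[V_1,V_8]\to(0,\infty)$ is the real-analytic solution of the ODE near $V_8$ with $C(V_8)=C_8$ and $C'(V_8)$ equal to the unique negative root of $-G_Cc^2+(F_C-G_V)c+F_V=0$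 (partials at $P_8$), continued to $[V_1,V_8]$. *)

From Stdlib Require Import Reals Lra.
From Coquelicot Require Import Coquelicot.
Open Scope R_scope.

Definition lam (m gamma z : R) : R := 1 + m * gamma * z.
Definition a1 (m gamma z : R) : R := 1 + m * (gamma - 1) / 2.
Definition a2 (m gamma z : R) : R := (m * (gamma - 1) + m * z * gamma * (gamma - 3)) / 2.
Definition a3 (m gamma z : R) : R := m * z * gamma * (gamma - 1) / 2.

Definition Gf (m gamma z V C : R) : R :=
  C ^ 2 * ((m + 1) * V + 2 * m * z) - V * (1 + V) * (lam m gamma z + V).
Definition Ff (m gamma z V C : R) : R :=
  C * (C ^ 2 * (1 + m * z / (1 + V)) - a1 m gamma z * (1 + V) ^ 2
       + a2 m gamma z * (1 + V) - a3 m gamma z).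

Definition wz (m gamma z : R) : R :=
  sqrt (1 - 2 * (gamma + 2) * z + (gamma - 2) ^ 2 * z ^ 2).
Definition V8 (m gamma z : R) : R := (-1 + (gamma - 2) * z + wz m gamma z) / 2.
Definition C8 (m gamma z : R) : R := 1 + V8 m gamma z.

Definition GC8 (m gamma z : R) : R :=
  Derive (fun C => Gf m gamma z (V8 m gamma z) C) (C8 m gamma z).
Definition GV8 (m gamma z : R) : R :=
  Derive (fun V => Gf m gamma z V (C8 m gamma z)) (V8 m gamma z).
Definition FC8 (m gamma z : R) : R :=
  Derive (fun C => Ff m gamma z (V8 m gamma z) C) (C8 m gamma z).
Definition FV8 (m gamma z : R) : R :=
  Derive (fun V => Ff m gamma z V (C8 m gamma z)) (V8 m gamma z).

Definition is_neg_slope (m gamma z c : R) : Prop :=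
  c < 0 /\ - GC8 m gamma z * c ^ 2 + (FC8 m gamma z - GV8 m gamma z) * c
           + FV8 m gamma z = 0.

Definition V1g (gamma : R) : R := - 2 / (gamma + 1).
Definition C1g (gamma : R) : R := sqrt (2 * gamma * (gamma - 1)) / (gamma + 1).
Definition zM (gamma : R) : R := / (sqrt gamma + sqrt 2) ^ 2.
Definition z2 (gamma : R) : R := (sqrt 33 - 3) / (6 + 2 * sqrt 33 + 4 * gamma).
Definition gamma1 : R := 1 + sqrt 2.

(* Sol m gamma z C : C is the solution C(.; gamma, z, P8) on [V1, V8]:
   - near V8 (on the left, up to and including V8) C is given by a convergent
     power series centred at V8 (real-analytic at V8), with C(V8) = C8 and
     C'(V8) = the negative root c;
   - on [V1, V8) C solves dC/dV = F/G (with G <> 0 along the curve),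
     C is continuous at V1 from the right, and C > 0 on [V1, V8]. *)
Definition Sol (m gamma z : R) (C : R -> R) : Prop :=
  let v1 := V1g gamma in
  let v8 := V8 m gamma z in
  v1 < v8 /\
  (exists (r : R) (a : nat -> R) (c : R),
      0 < r /\ is_neg_slope m gamma z c /\
      a 0%nat = C8 m gamma z /\ a 1%nat = c /\
      (forall x, Rabs (x - v8) < r -> ex_pseries a (x - v8)) /\
      (forall x, v8 - r < x <= v8 -> is_pseries a (x - v8) (C x))) /\
  (forall V, v1 <= V < v8 ->
      Gf m gamma z V (C V) <> 0) /\
  (forall V, v1 < V < v8 ->
      is_derive C V (Ff m gamma z V (C V) / Gf m gamma z V (C V))) /\
  filterlim C (at_right v1) (locally (C v1)) /\
  (forall V, v1 <= V <= v8 -> 0 < C V).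

From Stdlib Require Import Reals Lra Lia QArith Qreals List.
From Coquelicot Require Import Coquelicot.
Open Scope R_scope.

(* Write v := V8 and t := v - V.  For gamma > gamma1 and 0 < z <= z2 one has
   -645/2048 <= v < 0, and z is a rational function of (v, gamma).  The line L
   through P8 = (v, 1 + v) of slope s = (33 - 28 gamma)/50 is a barrier: the
   eigen-slope C'(V8) is below s, so C lies above L just left of V8; and on L
   between V1 and V8 one has G < 0 < F - s G, i.e. dC/dV = F/G < s, so at the
   rightmost point where C met L, C - L would have to decrease into positive
   values.  Hence C(V1) > L(V1) > C1.  The polynomial inequalities in
   (t, v, gamma) behind these claims are certified by interval arithmetic with
   bisection. *)

Inductive pexpr : Set :=
  | PConst (q : Q) | PVar (i : nat) | PAdd (e1 e2 : pexpr) | PMul (e1 e2 : pexpr).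

Fixpoint peval (env : list R) (e : pexpr) : R :=
  match e with
  | PConst q => Q2R q
  | PVar i => nth i env 0
  | PAdd e1 e2 => peval env e1 + peval env e2
  | PMul e1 e2 => peval env e1 * peval env e2
  end.

Definition box := list (Q * Q).

Definition in_box (env : list R) (b : box) : Prop :=
  forall i, Q2R (fst (nth i b (0, 0)%Q)) <= nth i env 0 <= Q2R (snd (nth i b (0, 0)%Q)).

Definition qmin (p q : Q) : Q := if Qle_bool p q then p else q.
Definition qmax (p q : Q) : Q := if Qle_bool p q then q else p.

Lemma Q2R_qmin p q : Q2R (qmin p q) = Rmin (Q2R p) (Q2R q).
Proof.
  unfold qmin; destruct (Qle_bool p q) eqn:E.
  - apply Qle_bool_iff, Qle_Rle in E. now rewrite Rmin_left.
  - assert (H : (q < p)%Q) by (apply Qnot_le_lt; intro H; apply Qle_bool_iff in H; congruence).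
    apply Qlt_Rlt in H. rewrite Rmin_right; lra.
Qed.

Lemma Q2R_qmax p q : Q2R (qmax p q) = Rmax (Q2R p) (Q2R q).
Proof.
  unfold qmax; destruct (Qle_bool p q) eqn:E.
  - apply Qle_bool_iff, Qle_Rle in E. now rewrite Rmax_right.
  - assert (H : (q < p)%Q) by (apply Qnot_le_lt; intro H; apply Qle_bool_iff in H; congruence).
    apply Qlt_Rlt in H. rewrite Rmax_left; lra.
Qed.

Lemma Rmult_between_l a b x y :
  a <= x <= b -> Rmin (a * y) (b * y) <= x * y <= Rmax (a * y) (b * y).
Proof.
  intros Hx; destruct (Rle_lt_dec 0 y).
  - rewrite Rmin_left, Rmax_right by nra; split; nra.
  - rewrite Rmin_right, Rmax_left by nra; split; nra.
Qed.

Lemma Rmult_interval a b c d x y : a <= x <= b -> c <= y <= d ->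
  Rmin (Rmin (a * c) (a * d)) (Rmin (b * c) (b * d)) <= x * y
  <= Rmax (Rmax (a * c) (a * d)) (Rmax (b * c) (b * d)).
Proof.
  intros Hx Hy.
  pose proof (Rmult_between_l a b x y Hx) as Hxy.
  pose proof (Rmult_between_l c d y a Hy) as Hay; pose proof (Rmult_between_l c d y b Hy) as Hby.
  rewrite !(Rmult_comm _ a), !(Rmult_comm _ b) in *.
  revert Hxy Hay Hby; unfold Rmin, Rmax; repeat destruct Rle_dec; lra.
Qed.

Fixpoint interval_eval (b : box) (e : pexpr) : Q * Q :=
  match e with
  | PConst q => (q, q)
  | PVar i => nth i b (0, 0)%Q
  | PAdd e1 e2 =>
      let (l1, h1) := interval_eval b e1 in let (l2, h2) := interval_eval b e2 in
      (Qred (l1 + l2), Qred (h1 + h2))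
  | PMul e1 e2 =>
      let (l1, h1) := interval_eval b e1 in let (l2, h2) := interval_eval b e2 in
      let p1 := Qred (l1 * l2) in let p2 := Qred (l1 * h2) in
      let p3 := Qred (h1 * l2) in let p4 := Qred (h1 * h2) in
      (qmin (qmin p1 p2) (qmin p3 p4), qmax (qmax p1 p2) (qmax p3 p4))
  end.

Lemma Q2R_Qred q : Q2R (Qred q) = Q2R q.
Proof. apply Qeq_eqR, Qred_correct. Qed.

Lemma interval_eval_sound env b e : in_box env b ->
  Q2R (fst (interval_eval b e)) <= peval env e <= Q2R (snd (interval_eval b e)).
Proof.
  intro Hb; induction e as [q|i|e1 IH1 e2 IH2|e1 IH1 e2 IH2]; cbn [interval_eval peval].
  - simpl; lra.
  - apply Hb.
  - destruct (interval_eval b e1), (interval_eval b e2); cbn [fst snd] in *.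
    rewrite !Q2R_Qred, !Q2R_plus; lra.
  - destruct (interval_eval b e1), (interval_eval b e2); cbn [fst snd] in *.
    rewrite !Q2R_qmin, !Q2R_qmax, !Q2R_Qred, !Q2R_mult.
    now apply Rmult_interval.
Qed.

Fixpoint set_nth (b : box) (d : nat) (x : Q * Q) : box :=
  match b, d with
  | nil, _ => nil
  | _ :: r, O => x :: r
  | y :: r, S d' => y :: set_nth r d' x
  end.

Lemma nth_set_nth b d x i : (d < length b)%nat ->
  nth i (set_nth b d x) (0, 0)%Q = if Nat.eqb i d then x else nth i b (0, 0)%Q.
Proof.
  revert d i; induction b as [|y r IH]; intros [|d] [|i] Hd; simpl in *; try lia; auto.
  apply IH; lia.
Qed.

Lemma length_set_nth b d x : length (set_nth b d x) = length b.
Proof. revert d; induction b; intros [|d]; simpl; auto. Qed.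

(* [k] is the index of the head of [b]; [bd] and [bw] are the index and width
   of the widest interval seen so far. *)
Fixpoint widest (b : box) (k bd : nat) (bw : Q) : nat :=
  match b with
  | nil => bd
  | (l, h) :: r =>
      if Qle_bool bw (h - l) then widest r (S k) k (h - l) else widest r (S k) bd bw
  end.

Lemma widest_lt b k bd bw : (bd < k + length b)%nat -> (widest b k bd bw < k + length b)%nat.
Proof.
  revert k bd bw; induction b as [|[l h] r IH]; intros k bd bw H; simpl in *; auto.
  destruct Qle_bool; rewrite <- Nat.add_succ_comm; apply IH; lia.
Qed.

Definition Qltb (p q : Q) : bool := negb (Qle_bool q p).

Lemma Qltb_Rlt p q : Qltb p q = true -> Q2R p < Q2R q.
Proof.
  unfold Qltb; intro H; apply Qlt_Rlt, Qnot_le_lt; intro H'.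
  apply Qle_bool_iff in H'; rewrite H' in H; discriminate.
Qed.

(* [bisect_pos n e c b] certifies [0 < e] on the part of the box [b] where
   [0 <= c], bisecting the widest side at most [n] levels deep. *)
Fixpoint bisect_pos (n : nat) (e c : pexpr) (b : box) : bool :=
  if Qltb 0 (fst (interval_eval b e)) then true else
  if Qltb (snd (interval_eval b c)) 0 then true else
  match n with
  | O => false
  | S n' =>
      let d := widest b 0 0 (-1) in
      let (l, h) := nth d b (0, 0)%Q in
      let mid := Qred ((l + h) / 2) in
      bisect_pos n' e c (set_nth b d (l, mid)) && bisect_pos n' e c (set_nth b d (mid, h))
  end.

Lemma bisect_pos_sound n e c b env : (0 < length b)%nat -> bisect_pos n e c b = true ->
  in_box env b -> 0 <= peval env c -> 0 < peval env e.
Proof.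
  revert b; induction n as [|n IH]; intros b Hl Hcheck Hin Hc; cbn [bisect_pos] in Hcheck.
  all: destruct (Qltb 0 _) eqn:He;
    [apply Qltb_Rlt in He; rewrite RMicromega.Q2R_0 in He;
     pose proof (interval_eval_sound env b e Hin); lra|].
  all: destruct (Qltb _ 0) eqn:Hc';
    [apply Qltb_Rlt in Hc'; rewrite RMicromega.Q2R_0 in Hc';
     pose proof (interval_eval_sound env b c Hin); lra|].
  - discriminate.
  - set (d := widest b 0 0 (-1)) in Hcheck.
    assert (Hd : (d < length b)%nat) by (apply (widest_lt b 0); simpl; lia).
    destruct (nth d b (0, 0)%Q) as [l h] eqn:Hn.
    apply andb_prop in Hcheck as [H1 H2].
    assert (Hsub : forall x, Q2R (fst x) <= nth d env 0 <= Q2R (snd x) ->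
              in_box env (set_nth b d x)).
    { intros x Hx i; rewrite nth_set_nth by exact Hd.
      destruct (Nat.eqb_spec i d) as [->|_]; [exact Hx|apply Hin]. }
    specialize (Hin d); rewrite Hn in Hin; cbn [fst snd] in Hin.
    assert (Hlen : forall x, (0 < length (set_nth b d x))%nat) by
      (intro; rewrite length_set_nth; exact Hl).
    destruct (Rle_dec (nth d env 0) (Q2R (Qred ((l + h) / 2)))).
    + apply (IH _ (Hlen _) H1); auto. apply Hsub; cbn [fst snd]; lra.
    + apply (IH _ (Hlen _) H2); auto. apply Hsub; cbn [fst snd]; lra.
Qed.

Lemma ball_R (x : R) (e : posreal) y : ball x e y <-> x - e < y < x + e.
Proof.
  change (Rabs (y - x) < e <-> x - e < y < x + e).
  split; [intro H; apply Rabs_def2 in H|intro H; apply Rabs_def1]; lra.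
Qed.

Lemma filterlim_locally_gt {T} (F : (T -> Prop) -> Prop) (f : T -> R) l c :
  filterlim f F (locally l) -> c < l -> F (fun y => c < f y).
Proof.
  intros Hf Hc; apply (Hf (fun t => c < t)).
  exists (mkposreal _ (proj2 (Rlt_0_minus _ _) Hc)); intros y Hy.
  apply ball_R in Hy; simpl in Hy; lra.
Qed.

Lemma filterlim_locally_lt {T} (F : (T -> Prop) -> Prop) (f : T -> R) l c :
  filterlim f F (locally l) -> l < c -> F (fun y => f y < c).
Proof.
  intros Hf Hc; apply (Hf (fun t => t < c)).
  exists (mkposreal _ (proj2 (Rlt_0_minus _ _) Hc)); intros y Hy.
  apply ball_R in Hy; simpl in Hy; lra.
Qed.

Lemma filterlim_Rminus {T} (F : (T -> Prop) -> Prop) {FF : Filter F} (f g : T -> R) lf lg :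
  filterlim f F (locally lf) -> filterlim g F (locally lg) ->
  filterlim (fun y => f y - g y) F (locally (lf - lg)).
Proof.
  intros Hf Hg.
  apply (filterlim_comp_2 (G := locally lf) (H := locally (opp lg))
           f (fun y => opp (g y)) (@plus R_AbsRing)); [exact Hf| |].
  - eapply filterlim_comp; [exact Hg|exact (@filterlim_opp R_AbsRing R_NormedModule lg)].
  - exact (@filterlim_plus R_AbsRing R_NormedModule lf (opp lg)).
Qed.

Lemma at_right_between x y : x < y -> at_right x (fun u => x < u < y).
Proof.
  intro Hxy; exists (mkposreal _ (proj2 (Rlt_0_minus _ _) Hxy)); intros u Hu Hxu.
  apply ball_R in Hu; simpl in Hu; lra.
Qed.

Lemma continuous_at_right_left (f : R -> R) x :
  continuous f x ->
  filterlim f (at_right x) (locally (f x)) /\ filterlim f (at_left x) (locally (f x)).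
Proof. split; eapply filterlim_filter_le_1; eauto; apply filter_le_within. Qed.

Lemma at_right_pos_2d (h : R -> R -> R) (f : R -> R) x :
  continuity_2d_pt h x (f x) -> filterlim f (at_right x) (locally (f x)) ->
  0 < h x (f x) -> at_right x (fun y => 0 < h y (f y)).
Proof.
  intros Hh Hf Hpos.
  destruct (Hh (mkposreal _ Hpos)) as [d Hd].
  assert (Hfy : at_right x (fun y => Rabs (f y - f x) < d)).
  { apply (Hf (fun w => Rabs (w - f x) < d)); exists d; intros w Hw; exact Hw. }
  assert (Hy : at_right x (fun y => Rabs (y - x) < d)) by (exists d; intros y Hy _; exact Hy).
  refine (filter_imp _ _ _ (filter_and _ _ Hfy Hy)); intros y [H1 H2].
  specialize (Hd y (f y) H2 H1); apply Rabs_def2 in Hd; simpl in Hd; lra.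
Qed.

Lemma derive_lt_left (g : R -> R) x c s : is_derive g x c -> c < s ->
  exists d, 0 < d /\ forall y, x - d < y < x -> s * (y - x) + g x < g y.
Proof.
  intros Hg Hcs; apply is_derive_Reals in Hg.
  destruct (Hg ((s - c) / 2) ltac:(lra)) as [d Hd].
  exists d; split; [apply cond_pos|]; intros y Hy.
  specialize (Hd (y - x) ltac:(lra) ltac:(rewrite Rabs_left; lra)).
  replace (x + (y - x)) with y in Hd by ring.
  apply Rabs_def2 in Hd as [Hd _].
  assert (Hq : (g y - g x) / (y - x) < s) by lra.
  apply (Rmult_lt_compat_r (x - y)) in Hq; [|lra].
  replace ((g y - g x) / (y - x) * (x - y)) with (g x - g y) in Hq by (field; lra).
  lra.
Qed.

Lemma ex_pseries_CV_radius a x : ex_pseries a x -> Rbar_le (Rabs x) (CV_radius a).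
Proof.
  intro Hx; apply Rbar_not_lt_le; intro Hlt; apply (CV_disk_outside a x Hlt).
  apply ex_series_lim_0 in Hx; eapply is_lim_seq_ext; [|exact Hx]; intro n.
  rewrite pow_n_pow; apply Rmult_comm.
Qed.

Lemma pseries_above_line_left (a : nat -> R) (f : R -> R) v0 r s :
  0 < r -> a 1%nat < s ->
  (forall x, Rabs (x - v0) < r -> ex_pseries a (x - v0)) ->
  (forall x, v0 - r < x <= v0 -> is_pseries a (x - v0) (f x)) ->
  exists d, 0 < d /\ forall x, v0 - d < x < v0 -> a 0%nat + s * (x - v0) < f x.
Proof.
  intros Hr Hs Hex Hf.
  assert (Hrad : Rbar_lt (Rabs 0) (CV_radius a)).
  { eapply Rbar_lt_le_trans; [|apply (ex_pseries_CV_radius a (v0 + r / 2 - v0))].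
    - rewrite Rabs_R0, Rabs_pos_eq by lra; simpl; lra.
    - apply Hex; rewrite Rabs_pos_eq; lra. }
  pose proof (is_derive_PSeries a 0 Hrad) as Hd.
  rewrite PSeries_0 in Hd; unfold PS_derive in Hd; simpl in Hd; rewrite Rmult_1_l in Hd.
  destruct (derive_lt_left _ _ _ _ Hd Hs) as [d [Hd0 Hbelow]].
  exists (Rmin d r); split; [apply Rmin_pos; lra|]; intros x Hx.
  pose proof (Rmin_l d r); pose proof (Rmin_r d r).
  rewrite <- (is_pseries_unique _ _ _ (Hf x ltac:(lra))), <- PSeries_0.
  specialize (Hbelow (x - v0) ltac:(lra)); lra.
Qed.

Section Barrier.

Variables (phi dphi : R -> R) (a b : R).
Hypothesis Hab : a < b.
Hypothesis Hder : forall x, a < x < b -> is_derive phi x (dphi x).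
Hypothesis Hright_a : filterlim phi (at_right a) (locally (phi a)).

Lemma barrier_continuous x : a < x < b -> continuous phi x.
Proof.
  intro Hx; assert (Hex : ex_derive phi x) by (exists (dphi x); auto).
  exact (ex_derive_continuous phi x Hex).
Qed.

Lemma barrier_at_right x : a <= x < b -> filterlim phi (at_right x) (locally (phi x)).
Proof.
  intro Hx; destruct (Req_dec x a) as [->|Hxa]; [exact Hright_a|].
  apply (continuous_at_right_left phi x), barrier_continuous; lra.
Qed.

Lemma barrier_at_left x : a < x < b -> filterlim phi (at_left x) (locally (phi x)).
Proof. intro Hx; apply (continuous_at_right_left phi x), barrier_continuous; lra. Qed.

Lemma last_zero : phi a <= 0 -> at_left b (fun x => 0 < phi x) ->
  exists x0, a <= x0 < b /\ phi x0 = 0 /\ forall y, x0 < y < b -> 0 < phi y.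
Proof.
  intros Ha [eps Hb].
  assert (Hnear : forall y, b - eps < y < b -> 0 < phi y).
  { intros y Hy; apply Hb; [apply ball_R; lra|lra]. }
  set (b' := b - eps / 2).
  assert (Hab' : a < b').
  { apply Rnot_le_lt; intro H; specialize (Hnear a); pose proof (cond_pos eps).
    unfold b' in H; lra. }
  set (E := fun x => a <= x <= b' /\ phi x <= 0).
  destruct (completeness E) as [x0 [Hub Hlub]].
  { exists b'; intros x Hx; apply Hx. }
  { exists a; split; [lra|exact Ha]. }
  assert (Ha0 : a <= x0) by (apply Hub; split; [lra|exact Ha]).
  assert (Hx0 : x0 <= b') by (apply Hlub; intros x Hx; apply Hx).
  assert (Hx0b : x0 < b) by (unfold b' in Hx0; pose proof (cond_pos eps); lra).
  assert (Hpos : forall y, x0 < y < b -> 0 < phi y).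
  { intros y Hy; destruct (Rle_lt_dec b' y) as [Hy'|Hy'].
    - pose proof (cond_pos eps); apply Hnear; unfold b' in Hy'; lra.
    - apply Rnot_le_lt; intro Hphi.
      assert (Hy0 : y <= x0) by (apply Hub; split; [lra|exact Hphi]); lra. }
  exists x0; split; [lra|split; [|exact Hpos]].
  apply Rle_antisym.
  - (* if [phi x0 > 0] then [x0 - d] is a smaller upper bound of [E] *)
    apply Rnot_lt_le; intro Hgt.
    assert (Hax0 : a < x0) by (destruct (Req_dec x0 a) as [->|]; lra).
    destruct (filterlim_locally_gt _ _ _ 0 (barrier_at_left x0 ltac:(lra)) Hgt) as [d Hd].
    assert (Hub' : x0 <= x0 - d).
    { apply Hlub; intros x [Hx Hphi]; apply Rnot_lt_le; intro Hxd.
      destruct (Req_dec x x0) as [->|Hne]; [lra|].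
      assert (x < x0) by (specialize (Hub x (conj Hx Hphi)); lra).
      assert (0 < phi x) by (apply Hd; [apply ball_R; lra|lra]); lra. }
    pose proof (cond_pos d); lra.
  - apply Rnot_lt_le; intro Hlt.
    assert (Hev : at_right x0 (fun y => phi y < 0 /\ x0 < y < b)).
    { apply filter_and; [|apply at_right_between; lra].
      exact (filterlim_locally_lt _ _ _ 0 (barrier_at_right x0 ltac:(lra)) Hlt). }
    destruct (Hierarchy.filter_ex _ Hev) as [y [Hy Hxy]].
    specialize (Hpos y Hxy); lra.
Qed.

Lemma barrier : at_left b (fun x => 0 < phi x) ->
  (forall x, a <= x < b -> phi x = 0 -> at_right x (fun y => dphi y < 0)) ->
  0 < phi a.
Proof.
  intros Hb Hcross; apply Rnot_le_lt; intro Ha.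
  destruct (last_zero Ha Hb) as [x0 [Hx0 [Hzero Hpos]]].
  destruct (filter_and _ _ (Hcross x0 Hx0 Hzero) (at_right_between x0 b ltac:(lra)))
    as [d Hd].
  set (y2 := x0 + Rmin (d / 2) ((b - x0) / 2)).
  assert (Hy2 : x0 < y2 < b /\ y2 < x0 + d).
  { pose proof (cond_pos d); pose proof (Rmin_l (d / 2) ((b - x0) / 2));
      pose proof (Rmin_r (d / 2) ((b - x0) / 2)); pose proof (Rmin_pos (d / 2) ((b - x0) / 2)).
    unfold y2; lra. }
  assert (Hev : at_right x0 (fun y => phi y < phi y2 /\ x0 < y < y2)).
  { apply filter_and; [|apply at_right_between; lra].
    rewrite <- Hzero in Hpos.
    exact (filterlim_locally_lt _ _ _ _ (barrier_at_right x0 Hx0) (Hpos y2 ltac:(lra))). }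
  destruct (Hierarchy.filter_ex _ Hev) as [y1 [Hlt Hy1]].
  destruct (MVT_gen phi y1 y2 dphi) as [c [Hc Hmvt]];
    rewrite Rmin_left, Rmax_right in * by lra.
  - intros x Hx; apply Hder; lra.
  - intros x Hx; apply continuity_pt_filterlim, barrier_continuous; lra.
  - destruct (Hd c) as [Hdc _]; [apply ball_R; pose proof (cond_pos d); lra|lra|].
    assert (dphi c * (y2 - y1) < 0) by (apply Rmult_neg_pos; lra); lra.
Qed.

End Barrier.

Definition barrier_slope (g : R) : R := (33 - 28 * g) / 50.
Definition barrier_line (g v V : R) : R := 1 + v + barrier_slope g * (V - v).
Definition z_den (g v : R) : R := 2 - (g - 2) * v.
(* [V8] is the larger root of [v^2 + (1 - (gamma - 2) z) v + 2 z = 0], which is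
   linear in [z]; solving for [z] parametrizes the problem by [v = V8]. *)
Definition z_of_V8 (g v : R) : R := - v * (1 + v) / z_den g v.

Definition centered (t v g : R) : list R := (t - 5/16) :: (v + 5/32) :: (g - 11/4) :: nil.

Definition box_tvg : box :=
  (((-5)#16, 71#256) :: ((-325)#2048, 5#32) :: ((-689)#2048, 1#4) :: nil)%Q.
Definition box_vg : box :=
  (((-5)#16, (-5)#16) :: ((-325)#2048, 5#32) :: ((-689)#2048, 1#4) :: nil)%Q.

Lemma in_box_tvg t v g :
  0 <= t <= 1208/2048 -> -645/2048 <= v <= 0 -> 4943/2048 <= g <= 3 ->
  in_box (centered t v g) box_tvg.
Proof.
  intros Ht Hv Hg [|[|[|i]]]; cbn [nth centered box_tvg fst snd]; unfold Q2R; simpl; try lra.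
  destruct i; simpl; lra.
Qed.

Lemma in_box_vg v g : -645/2048 <= v <= 0 -> 4943/2048 <= g <= 3 ->
  in_box (centered 0 v g) box_vg.
Proof.
  intros Hv Hg [|[|[|i]]]; cbn [nth centered box_vg fst snd]; unfold Q2R; simpl; try lra.
  destruct i; simpl; lra.
Qed.

Definition pG1 : pexpr :=
  (PAdd (PMul (PAdd (PMul (PAdd (PMul (PAdd (PMul (PAdd (PMul (PAdd (PMul (PConst ((-784)#1)) (PVar
  2)) (PConst ((-3052)#1))) (PVar 2)) (PConst ((-2534)#1))) (PVar 2)) (PConst ((-1029)#2))) (PVar
  1)) (PAdd (PMul (PAdd (PMul (PAdd (PMul (PConst (245#2)) (PVar 2)) (PConst (16359#8))) (PVar 2))
  (PConst (85183#16))) (PVar 2)) (PConst (92953#64)))) (PVar 0)) (PAdd (PMul (PAdd (PMul (PAdd (PMul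
  (PAdd (PMul (PAdd (PMul (PConst (784#1)) (PVar 2)) (PConst (1036#1))) (PVar 2)) (PConst
  ((-5252)#1))) (PVar 2)) (PConst ((-6162)#1))) (PVar 1)) (PAdd (PMul (PAdd (PMul (PAdd (PMul
  (PConst ((-735)#1)) (PVar 2)) (PConst ((-23261)#4))) (PVar 2)) (PConst ((-14113)#2))) (PVar 2))
  (PConst (117689#16)))) (PVar 1)) (PAdd (PMul (PAdd (PMul (PAdd (PMul (PConst (6125#64)) (PVar 2))
  (PConst (477015#256))) (PVar 2)) (PConst (2537165#256))) (PVar 2)) (PConst (1748305#128))))) (PVar
  0)) (PAdd (PMul (PAdd (PMul (PAdd (PMul (PAdd (PMul (PAdd (PMul (PConst (2800#1)) (PVar 2))
  (PConst (13050#1))) (PVar 2)) (PConst (31025#2))) (PVar 1)) (PAdd (PMul (PAdd (PMul (PAdd (PMul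
  (PConst (245#1)) (PVar 2)) (PConst (7245#4))) (PVar 2)) (PConst (39865#16))) (PVar 2)) (PConst
  (122585#64)))) (PVar 1)) (PAdd (PMul (PAdd (PMul (PAdd (PMul (PConst ((-1225)#8)) (PVar 2))
  (PConst ((-140105)#64))) (PVar 2)) (PConst ((-3586565)#512))) (PVar 2)) (PConst
  ((-3865865)#2048)))) (PVar 1)) (PAdd (PMul (PAdd (PMul (PAdd (PMul (PConst (18375#1024)) (PVar 2))
  (PConst (1803375#4096))) (PVar 2)) (PConst (52677375#16384))) (PVar 2)) (PConst
  (467631375#65536))))).
Definition pG2 : pexpr :=
  (PAdd (PMul (PAdd (PMul (PAdd (PMul (PAdd (PMul (PAdd (PMul (PAdd (PMul (PConst ((-2352)#1)) (PVar
  2)) (PConst ((-9156)#1))) (PVar 2)) (PConst ((-8852)#1))) (PVar 2)) (PConst ((-2481)#1))) (PVar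
  1)) (PAdd (PMul (PAdd (PMul (PAdd (PMul (PConst (735#2)) (PVar 2)) (PConst (49077#8))) (PVar 2))
  (PConst (129337#8))) (PVar 2)) (PConst (224117#32)))) (PVar 0)) (PAdd (PMul (PAdd (PMul (PAdd
  (PMul (PAdd (PMul (PAdd (PMul (PConst (2352#1)) (PVar 2)) (PConst (3892#1))) (PVar 2)) (PConst
  ((-10792)#1))) (PVar 2)) (PConst ((-17175)#1))) (PVar 1)) (PAdd (PMul (PAdd (PMul (PAdd (PMul
  (PConst ((-2205)#1)) (PVar 2)) (PConst ((-67627)#4))) (PVar 2)) (PConst ((-19788)#1))) (PVar 2))
  (PConst (223113#16)))) (PVar 1)) (PAdd (PMul (PAdd (PMul (PAdd (PMul (PConst (18375#64)) (PVar 2))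
  (PConst (1404585#256))) (PVar 2)) (PConst (3762605#128))) (PVar 2)) (PConst (39706085#1024)))))
  (PVar 0)) (PAdd (PMul (PAdd (PMul (PAdd (PMul (PAdd (PMul (PAdd (PMul (PConst (8400#1)) (PVar 2))
  (PConst (40700#1))) (PVar 2)) (PConst (55000#1))) (PVar 1)) (PAdd (PMul (PAdd (PMul (PAdd (PMul
  (PConst (735#1)) (PVar 2)) (PConst (22715#4))) (PVar 2)) (PConst (101195#8))) (PVar 2)) (PConst
  (400825#16)))) (PVar 1)) (PAdd (PMul (PAdd (PMul (PAdd (PMul (PConst ((-3675)#8)) (PVar 2))
  (PConst ((-409535)#64))) (PVar 2)) (PConst ((-4840215)#256))) (PVar 2)) (PConst (72505#32))))
  (PVar 1)) (PAdd (PMul (PAdd (PMul (PAdd (PMul (PConst (55125#1024)) (PVar 2)) (PConst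
  (5277825#4096))) (PVar 2)) (PConst (75234525#8192))) (PVar 2)) (PConst (341535075#16384))))).
Definition pH1 : pexpr :=
  (PAdd (PMul (PAdd (PMul (PAdd (PMul (PAdd (PMul (PAdd (PMul (PAdd (PMul (PAdd (PMul (PAdd (PMul
  (PConst ((-21952)#1)) (PVar 2)) (PConst ((-154952)#1))) (PVar 2)) (PConst ((-382740)#1))) (PVar
  2)) (PConst ((-781179)#2))) (PVar 2)) (PConst ((-272151)#2))) (PVar 1)) (PAdd (PMul (PAdd (PMul
  (PAdd (PMul (PAdd (PMul (PConst (3430#1)) (PVar 2)) (PConst (272461#4))) (PVar 2)) (PConst
  (2694233#8))) (PVar 2)) (PConst (39601767#64))) (PVar 2)) (PConst (24584307#64)))) (PVar 0)) (PAdd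
  (PMul (PAdd (PMul (PAdd (PMul (PAdd (PMul (PAdd (PMul (PAdd (PMul (PConst (65856#1)) (PVar 2))
  (PConst (412608#1))) (PVar 2)) (PConst (754108#1))) (PVar 2)) (PConst (285505#1))) (PVar 2))
  (PConst ((-408633)#4))) (PVar 1)) (PAdd (PMul (PAdd (PMul (PAdd (PMul (PAdd (PMul (PConst
  ((-19208)#1)) (PVar 2)) (PConst ((-536431)#2))) (PVar 2)) (PConst ((-2291755)#2))) (PVar 2))
  (PConst ((-56543311)#32))) (PVar 2)) (PConst ((-33377413)#64)))) (PVar 1)) (PAdd (PMul (PAdd (PMul
  (PAdd (PMul (PAdd (PMul (PConst (22295#16)) (PVar 2)) (PConst (1861839#64))) (PVar 2)) (PConst
  (38840709#256))) (PVar 2)) (PConst (191058329#512))) (PVar 2)) (PConst (2175601347#4096))))) (PVar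
  0)) (PAdd (PMul (PAdd (PMul (PAdd (PMul (PAdd (PMul (PAdd (PMul (PAdd (PMul (PAdd (PMul (PConst
  ((-43904)#1)) (PVar 2)) (PConst ((-122808)#1))) (PVar 2)) (PConst (587244#1))) (PVar 2)) (PConst
  (4502421#2))) (PVar 2)) (PConst (1677281#1))) (PVar 1)) (PAdd (PMul (PAdd (PMul (PAdd (PMul (PAdd
  (PMul (PConst (17836#1)) (PVar 2)) (PConst (1102969#4))) (PVar 2)) (PConst (9620535#8))) (PVar 2))
  (PConst (94002829#64))) (PVar 2)) (PConst ((-5971953)#8)))) (PVar 1)) (PAdd (PMul (PAdd (PMul
  (PAdd (PMul (PAdd (PMul (PConst (39445#8)) (PVar 2)) (PConst ((-4572393)#128))) (PVar 2)) (PConst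
  ((-118961419)#256))) (PVar 2)) (PConst ((-3824746701)#2048))) (PVar 2)) (PConst
  ((-3254177053)#1024)))) (PVar 1)) (PAdd (PMul (PAdd (PMul (PAdd (PMul (PAdd (PMul (PConst
  ((-265825)#256)) (PVar 2)) (PConst ((-62502825)#4096))) (PVar 2)) (PConst ((-443237175)#8192)))
  (PVar 2)) (PConst ((-16706382725)#65536))) (PVar 2)) (PConst ((-2978007525)#4096))))) (PVar 0))
  (PAdd (PMul (PAdd (PMul (PAdd (PMul (PAdd (PMul (PAdd (PMul (PAdd (PMul (PAdd (PMul (PConst
  ((-156800)#1)) (PVar 2)) (PConst ((-1179700)#1))) (PVar 2)) (PConst ((-2888350)#1))) (PVar 2))
  (PConst ((-9078525)#4))) (PVar 1)) (PAdd (PMul (PAdd (PMul (PAdd (PMul (PAdd (PMul (PConst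
  ((-13720)#1)) (PVar 2)) (PConst ((-507955)#2))) (PVar 2)) (PConst ((-5687095)#4))) (PVar 2))
  (PConst ((-94725695)#32))) (PVar 2)) (PConst ((-52940565)#32)))) (PVar 1)) (PAdd (PMul (PAdd (PMul
  (PAdd (PMul (PAdd (PMul (PConst ((-1715)#2)) (PVar 2)) (PConst (838845#64))) (PVar 2)) (PConst
  (5206075#64))) (PVar 2)) (PConst (577347145#1024))) (PVar 2)) (PConst (3448572435#2048)))) (PVar
  1)) (PAdd (PMul (PAdd (PMul (PAdd (PMul (PAdd (PMul (PConst (351575#128)) (PVar 2)) (PConst
  (79308635#2048))) (PVar 2)) (PConst (722473455#4096))) (PVar 2)) (PConst (22471213495#32768)))
  (PVar 2)) (PConst (48220787845#32768)))) (PVar 1)) (PAdd (PMul (PAdd (PMul (PAdd (PMul (PAdd (PMul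
  (PConst ((-728875)#2048)) (PVar 2)) (PConst ((-541072525)#65536))) (PVar 2)) (PConst
  ((-11487105775)#262144))) (PVar 2)) (PConst (7336773325#1048576))) (PVar 2)) (PConst
  (1076689601175#4194304))))).
Definition pH2 : pexpr :=
  (PAdd (PMul (PAdd (PMul (PAdd (PMul (PAdd (PMul (PAdd (PMul (PAdd (PMul (PAdd (PMul (PAdd (PMul
  (PConst ((-43904)#1)) (PVar 2)) (PConst ((-309904)#1))) (PVar 2)) (PConst ((-765480)#1))) (PVar
  2)) (PConst ((-781179)#1))) (PVar 2)) (PConst ((-272151)#1))) (PVar 1)) (PAdd (PMul (PAdd (PMul
  (PAdd (PMul (PAdd (PMul (PConst (6860#1)) (PVar 2)) (PConst (272461#2))) (PVar 2)) (PConst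
  (2694233#4))) (PVar 2)) (PConst (39601767#32))) (PVar 2)) (PConst (24584307#32)))) (PVar 0)) (PAdd
  (PMul (PAdd (PMul (PAdd (PMul (PAdd (PMul (PAdd (PMul (PAdd (PMul (PConst (109760#1)) (PVar 2))
  (PConst (666064#1))) (PVar 2)) (PConst (1185376#1))) (PVar 2)) (PConst (462158#1))) (PVar 2))
  (PConst ((-329109)#2))) (PVar 1)) (PAdd (PMul (PAdd (PMul (PAdd (PMul (PAdd (PMul (PConst
  ((-31556)#1)) (PVar 2)) (PConst ((-481992)#1))) (PVar 2)) (PConst ((-4116183)#2))) (PVar 2))
  (PConst ((-50119883)#16))) (PVar 2)) (PConst ((-36491257)#32)))) (PVar 1)) (PAdd (PMul (PAdd (PMul
  (PAdd (PMul (PAdd (PMul (PConst (36015#16)) (PVar 2)) (PConst (3427963#64))) (PVar 2)) (PConst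
  (22605757#64))) (PVar 2)) (PConst (59689621#64))) (PVar 2)) (PConst (2089244487#2048))))) (PVar
  0)) (PAdd (PMul (PAdd (PMul (PAdd (PMul (PAdd (PMul (PAdd (PMul (PAdd (PMul (PAdd (PMul (PConst
  ((-65856)#1)) (PVar 2)) (PConst ((-164864)#1))) (PVar 2)) (PConst (912128#1))) (PVar 2)) (PConst
  (3332873#1))) (PVar 2)) (PConst (2652100#1))) (PVar 1)) (PAdd (PMul (PAdd (PMul (PAdd (PMul (PAdd
  (PMul (PConst (33614#1)) (PVar 2)) (PConst (490210#1))) (PVar 2)) (PConst (1948004#1))) (PVar 2))
  (PConst (75474737#32))) (PVar 2)) (PConst ((-5467807)#16)))) (PVar 1)) (PAdd (PMul (PAdd (PMul
  (PAdd (PMul (PAdd (PMul (PConst (142345#16)) (PVar 2)) (PConst ((-959581)#16))) (PVar 2)) (PConst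
  ((-28118663)#32))) (PVar 2)) (PConst ((-3169176113)#1024))) (PVar 2)) (PConst
  ((-1080627117)#256)))) (PVar 1)) (PAdd (PMul (PAdd (PMul (PAdd (PMul (PAdd (PMul (PConst
  ((-1003275)#512)) (PVar 2)) (PConst ((-1991885)#64))) (PVar 2)) (PConst ((-136570265)#1024)))
  (PVar 2)) (PConst ((-13227563065)#32768))) (PVar 2)) (PConst ((-13957788945)#16384))))) (PVar 0))
  (PAdd (PMul (PAdd (PMul (PAdd (PMul (PAdd (PMul (PAdd (PMul (PAdd (PMul (PAdd (PMul (PConst
  ((-235200)#1)) (PVar 2)) (PConst ((-1774200)#1))) (PVar 2)) (PConst ((-4498300)#1))) (PVar 2))
  (PConst ((-7753125)#2))) (PVar 1)) (PAdd (PMul (PAdd (PMul (PAdd (PMul (PAdd (PMul (PConst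
  ((-20580)#1)) (PVar 2)) (PConst ((-374920)#1))) (PVar 2)) (PConst ((-2137685)#1))) (PVar 2))
  (PConst ((-80093435)#16))) (PVar 2)) (PConst ((-64508675)#16)))) (PVar 1)) (PAdd (PMul (PAdd (PMul
  (PAdd (PMul (PAdd (PMul (PConst ((-1715)#8)) (PVar 2)) (PConst (623875#16))) (PVar 2)) (PConst
  (9467955#64))) (PVar 2)) (PConst (108982885#512))) (PVar 2)) (PConst (774004535#1024)))) (PVar 1))
  (PAdd (PMul (PAdd (PMul (PAdd (PMul (PAdd (PMul (PConst (1157625#256)) (PVar 2)) (PConst
  (984095#16))) (PVar 2)) (PConst (237748345#1024))) (PVar 2)) (PConst (10059472435#16384))) (PVar
  2)) (PConst (20958812435#16384)))) (PVar 1)) (PAdd (PMul (PAdd (PMul (PAdd (PMul (PAdd (PMul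
  (PConst ((-5102125)#8192)) (PVar 2)) (PConst ((-60977875)#4096))) (PVar 2)) (PConst
  ((-11576522375)#131072))) (PVar 2)) (PConst ((-49803883375)#524288))) (PVar 2)) (PConst
  (430740288375#2097152))))).
Definition pQ1 : pexpr :=
  (PAdd (PMul (PAdd (PMul (PAdd (PMul (PAdd (PMul (PAdd (PMul (PAdd (PMul (PConst ((-1568)#1)) (PVar
  2)) (PConst ((-11797)#1))) (PVar 2)) (PConst ((-57767)#2))) (PVar 2)) (PConst ((-363141)#16)))
  (PVar 1)) (PAdd (PMul (PAdd (PMul (PAdd (PMul (PConst ((-833)#1)) (PVar 2)) (PConst
  ((-195173)#32))) (PVar 2)) (PConst ((-785047)#64))) (PVar 2)) (PConst ((-1349333)#512)))) (PVar
  1)) (PAdd (PMul (PAdd (PMul (PAdd (PMul (PConst (12005#32)) (PVar 2)) (PConst (3008537#1024)))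
  (PVar 2)) (PConst (23913939#2048))) (PVar 2)) (PConst (348903753#16384)))) (PVar 1)) (PAdd (PMul
  (PAdd (PMul (PAdd (PMul (PConst ((-33075)#1024)) (PVar 2)) (PConst ((-8688735)#32768))) (PVar 2))
  (PConst (80947755#65536))) (PVar 2)) (PConst (3256360785#524288)))).
Definition pQ2 : pexpr :=
  (PAdd (PMul (PAdd (PMul (PAdd (PMul (PAdd (PMul (PAdd (PMul (PAdd (PMul (PConst ((-2352)#1)) (PVar
  2)) (PConst ((-17742)#1))) (PVar 2)) (PConst ((-44983)#1))) (PVar 2)) (PConst ((-310125)#8)))
  (PVar 1)) (PAdd (PMul (PAdd (PMul (PAdd (PMul (PConst ((-2499)#2)) (PVar 2)) (PConst
  ((-148119)#16))) (PVar 2)) (PConst ((-720615)#32))) (PVar 2)) (PConst ((-4069693)#256)))) (PVar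
  1)) (PAdd (PMul (PAdd (PMul (PAdd (PMul (PConst (36015#64)) (PVar 2)) (PConst (2232531#512)))
  (PVar 2)) (PConst (14550947#1024))) (PVar 2)) (PConst (179234129#8192)))) (PVar 1)) (PAdd (PMul
  (PAdd (PMul (PAdd (PMul (PConst ((-99225)#2048)) (PVar 2)) (PConst ((-6350805)#16384))) (PVar 2))
  (PConst (32803515#32768))) (PVar 2)) (PConst (1701937305#262144)))).
Definition pFV1 : pexpr :=
  (PAdd (PMul (PAdd (PMul (PAdd (PMul (PAdd (PMul (PAdd (PMul (PConst ((-1)#1)) (PVar 2)) (PConst
  ((-13)#2))) (PVar 2)) (PConst ((-133)#16))) (PVar 1)) (PAdd (PMul (PAdd (PMul (PConst ((-17)#32))
  (PVar 2)) (PConst ((-221)#64))) (PVar 2)) (PConst (1835#512)))) (PVar 1)) (PAdd (PMul (PAdd (PMul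
  (PConst (245#1024)) (PVar 2)) (PConst (7281#2048))) (PVar 2)) (PConst (311113#16384)))) (PVar 1))
  (PAdd (PMul (PAdd (PMul (PConst ((-675)#32768)) (PVar 2)) (PConst (101817#65536))) (PVar 2))
  (PConst (4444497#524288)))).
Definition pFV2 : pexpr :=
  (PAdd (PMul (PAdd (PMul (PAdd (PMul (PAdd (PMul (PAdd (PMul (PConst ((-1)#1)) (PVar 2)) (PConst
  ((-9)#2))) (PVar 2)) (PConst ((-109)#16))) (PVar 1)) (PAdd (PMul (PAdd (PMul (PConst ((-17)#32))
  (PVar 2)) (PConst ((-25)#64))) (PVar 2)) (PConst (963#512)))) (PVar 1)) (PAdd (PMul (PAdd (PMul
  (PConst (245#1024)) (PVar 2)) (PConst (9117#2048))) (PVar 2)) (PConst (211537#16384)))) (PVar 1))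
  (PAdd (PMul (PAdd (PMul (PConst ((-675)#32768)) (PVar 2)) (PConst (87237#65536))) (PVar 2))
  (PConst (2864025#524288)))).
Definition pL : pexpr :=
  (PAdd (PMul (PAdd (PMul (PAdd (PMul (PConst (28#1)) (PVar 2)) (PConst (199#1))) (PVar 2)) (PConst
  (705#2))) (PVar 1)) (PAdd (PMul (PAdd (PMul (PConst ((-35)#8)) (PVar 2)) (PConst (2397#32))) (PVar
  2)) (PConst (14107#64)))).
Definition pL2 : pexpr :=
  (PAdd (PMul (PAdd (PMul (PAdd (PMul (PAdd (PMul (PAdd (PMul (PAdd (PMul (PConst (784#1)) (PVar 2))
  (PConst (11144#1))) (PVar 2)) (PConst (59341#1))) (PVar 2)) (PConst (140295#1))) (PVar 2)) (PConst
  (497025#4))) (PVar 1)) (PAdd (PMul (PAdd (PMul (PAdd (PMul (PAdd (PMul (PConst ((-245)#1)) (PVar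
  2)) (PConst (4907#2))) (PVar 2)) (PConst (625151#16))) (PVar 2)) (PConst (2248589#16))) (PVar 2))
  (PConst (9945435#64)))) (PVar 1)) (PAdd (PMul (PAdd (PMul (PAdd (PMul (PAdd (PMul (PConst
  (1225#64)) (PVar 2)) (PConst ((-83895)#128))) (PVar 2)) (PConst ((-1349371)#1024))) (PVar 2))
  (PConst (10774479#1024))) (PVar 2)) (PConst (100447449#4096)))).
Definition pV1 : pexpr :=
  (PAdd (PMul (PAdd (PMul (PConst ((-1)#1)) (PVar 2)) (PConst ((-15)#4))) (PVar 0)) (PAdd (PMul
  (PAdd (PMul (PConst (1#1)) (PVar 2)) (PConst (15#4))) (PVar 1)) (PAdd (PMul (PConst ((-15)#32))
  (PVar 2)) (PConst (31#128))))).

Ltac unfold_peval := cbn [peval nth centered]; unfold Q2R; cbn [Qnum Qden].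

Lemma peval_pV1 t v g : peval (centered t v g) pV1 = v * (g + 1) + 2 - t * (g + 1).
Proof. unfold pV1; unfold_peval; field. Qed.

Lemma peval_const_0 env : peval env (PConst 0) = 0.
Proof. apply RMicromega.Q2R_0. Qed.

(* [pV1 >= 0] expresses [V1 <= v - t], so the certificates are only checked there. *)
Lemma certificates_tvg t v g :
  0 <= t <= 1208/2048 -> -645/2048 <= v <= 0 -> 4943/2048 <= g <= 3 ->
  0 <= v * (g + 1) + 2 - t * (g + 1) ->
  0 < peval (centered t v g) pG1 /\ 0 < peval (centered t v g) pG2 /\
  0 < peval (centered t v g) pH1 /\ 0 < peval (centered t v g) pH2.
Proof.
  intros Ht Hv Hg HV1.
  repeat split; (eapply (bisect_pos_sound 40 _ pV1 box_tvg);
    [simpl; lia | vm_compute; reflexivity | now apply in_box_tvg | now rewrite peval_pV1]).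
Qed.

Lemma certificates_vg v g : -645/2048 <= v <= 0 -> 4943/2048 <= g <= 3 ->
  0 < peval (centered 0 v g) pQ1 /\ 0 < peval (centered 0 v g) pQ2 /\
  0 < peval (centered 0 v g) pFV1 /\ 0 < peval (centered 0 v g) pFV2 /\
  0 < peval (centered 0 v g) pL /\ 0 < peval (centered 0 v g) pL2.
Proof.
  intros Hv Hg.
  repeat split; (eapply (bisect_pos_sound 40 _ (PConst 0) box_vg);
    [simpl; lia | vm_compute; reflexivity | now apply in_box_vg
    | rewrite peval_const_0; apply Rle_refl]).
Qed.

Ltac unfold_problem :=
  unfold z_of_V8, z_den, barrier_line, barrier_slope, Ff, Gf, a1, a2, a3, lam in *;
  unfold_peval.

Lemma Gf_line_1 g v t : z_den g v <> 0 ->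
  Gf 1 g (z_of_V8 g v) (v - t) (barrier_line g v (v - t)) * z_den g v
  = - t * (peval (centered t v g) pG1 / 1250).
Proof. intro H; unfold pG1; unfold_problem; field; exact H. Qed.

Lemma Gf_line_2 g v t : z_den g v <> 0 ->
  Gf 2 g (z_of_V8 g v) (v - t) (barrier_line g v (v - t)) * z_den g v
  = - t * (peval (centered t v g) pG2 / 2500).
Proof. intro H; unfold pG2; unfold_problem; field; exact H. Qed.

Lemma Ff_minus_slope_Gf_line_1 g v t : z_den g v <> 0 -> 1 + (v - t) <> 0 ->
  (1 + (v - t)) * z_den g v *
  (Ff 1 g (z_of_V8 g v) (v - t) (barrier_line g v (v - t))
   - barrier_slope g * Gf 1 g (z_of_V8 g v) (v - t) (barrier_line g v (v - t)))
  = t * (peval (centered t v g) pH1 / 125000).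
Proof. intros H H'; unfold pH1; unfold_problem; field; auto. Qed.

Lemma Ff_minus_slope_Gf_line_2 g v t : z_den g v <> 0 -> 1 + (v - t) <> 0 ->
  (1 + (v - t)) * z_den g v *
  (Ff 2 g (z_of_V8 g v) (v - t) (barrier_line g v (v - t))
   - barrier_slope g * Gf 2 g (z_of_V8 g v) (v - t) (barrier_line g v (v - t)))
  = t * (peval (centered t v g) pH2 / 125000).
Proof. intros H H'; unfold pH2; unfold_problem; field; auto. Qed.

Lemma V1_gt_minus_one g : 1 < g -> -1 < V1g g.
Proof.
  intro Hg; unfold V1g; apply Rmult_lt_reg_r with (g + 1); [lra|].
  unfold Rdiv; rewrite Rmult_assoc, Rinv_l by lra; lra.
Qed.

(* As [G < 0], the second inequality says [F/G < barrier_slope g]: between [V1]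
   and [P8] the field is less steep than the barrier line. *)
Lemma barrier_line_signs M g v V : (M = 1 \/ M = 2) -> 4943/2048 <= g <= 3 ->
  -645/2048 <= v < 0 -> V1g g <= V < v ->
  Gf M g (z_of_V8 g v) V (barrier_line g v V) < 0 /\
  0 < Ff M g (z_of_V8 g v) V (barrier_line g v V)
      - barrier_slope g * Gf M g (z_of_V8 g v) V (barrier_line g v V).
Proof.
  intros HM Hg Hv HV.
  assert (HD : 0 < z_den g v) by (unfold z_den; nra).
  assert (HV2 : 0 <= (g + 1) * V + 2).
  { destruct HV as [HV _]; apply Rmult_le_compat_l with (r := g + 1) in HV; [|lra].
    unfold V1g in HV; replace ((g + 1) * (-2 / (g + 1))) with (-2) in HV by (field; lra).
    lra. }
  assert (HV1 : 2 / (g + 1) <= 1208/2048).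
  { apply Rmult_le_reg_r with (g + 1); [lra|].
    unfold Rdiv; rewrite Rmult_assoc, Rinv_l by lra; lra. }
  pose proof (V1_gt_minus_one g ltac:(lra)).
  set (t := v - V); replace V with (v - t) by (unfold t; ring).
  assert (Ht : 0 < t <= 1208/2048) by (unfold t, V1g in *; lra).
  assert (Hc : 0 <= v * (g + 1) + 2 - t * (g + 1)) by (unfold t; nra).
  assert (H1 : 0 < 1 + (v - t)) by (unfold t; lra).
  destruct (certificates_tvg t v g ltac:(lra) ltac:(lra) Hg Hc) as (HG1 & HG2 & HH1 & HH2).
  destruct HM as [-> | ->].
  - pose proof (Gf_line_1 g v t ltac:(lra)).
    pose proof (Ff_minus_slope_Gf_line_1 g v t ltac:(lra) ltac:(lra)).
    split; [|assert (0 < (1 + (v - t)) * z_den g v) by nra]; nra.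
  - pose proof (Gf_line_2 g v t ltac:(lra)).
    pose proof (Ff_minus_slope_Gf_line_2 g v t ltac:(lra) ltac:(lra)).
    split; [|assert (0 < (1 + (v - t)) * z_den g v) by nra]; nra.
Qed.

Definition GC_at (M g z v : R) : R := 2 * (1 + v) * ((M + 1) * v + 2 * M * z).
Definition GV_at (M g z v : R) : R :=
  (1 + v) ^ 2 * (M + 1) - ((1 + v) * (lam M g z + v) + v * (lam M g z + v) + v * (1 + v)).
Definition FC_at (M g z v : R) : R :=
  ((1 + v) ^ 2 * (1 + M * z / (1 + v)) - a1 M g z * (1 + v) ^ 2 + a2 M g z * (1 + v) - a3 M g z)
  + (1 + v) * (2 * (1 + v) * (1 + M * z / (1 + v))).
Definition FV_at (M g z v : R) : R :=
  (1 + v) * ((1 + v) ^ 2 * (- (M * z) / (1 + v) ^ 2) - 2 * a1 M g z * (1 + v) + a2 M g z).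

Lemma GC8_eq M g z : GC8 M g z = GC_at M g z (V8 M g z).
Proof. apply is_derive_unique; unfold Gf; auto_derive; [exact I|unfold C8, GC_at; ring]. Qed.

Lemma GV8_eq M g z : GV8 M g z = GV_at M g z (V8 M g z).
Proof. apply is_derive_unique; unfold Gf; auto_derive; [exact I|unfold C8, GV_at; ring]. Qed.

Lemma FC8_eq M g z : 1 + V8 M g z <> 0 -> FC8 M g z = FC_at M g z (V8 M g z).
Proof.
  intro H; apply is_derive_unique; unfold Ff; auto_derive; [auto|unfold C8, FC_at; field; auto].
Qed.

Lemma FV8_eq M g z : 1 + V8 M g z <> 0 -> FV8 M g z = FV_at M g z (V8 M g z).
Proof.
  intro H; apply is_derive_unique; unfold Ff; auto_derive; [auto|unfold C8, FV_at; field; auto].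
Qed.

Definition slope_quadratic (M g z v s : R) : R :=
  - GC_at M g z v * s ^ 2 + (FC_at M g z v - GV_at M g z v) * s + FV_at M g z v.

Lemma slope_quadratic_1 g v : z_den g v <> 0 -> 1 + v <> 0 ->
  - slope_quadratic 1 g (z_of_V8 g v) v (barrier_slope g) * z_den g v
  = peval (centered 0 v g) pQ1 / 1250.
Proof.
  intros H H'; unfold slope_quadratic, GC_at, GV_at, FC_at, FV_at, pQ1; unfold_problem.
  field_simplify_eq; [ring|auto].
Qed.

Lemma slope_quadratic_2 g v : z_den g v <> 0 -> 1 + v <> 0 ->
  - slope_quadratic 2 g (z_of_V8 g v) v (barrier_slope g) * z_den g v
  = peval (centered 0 v g) pQ2 / 1250.
Proof.
  intros H H'; unfold slope_quadratic, GC_at, GV_at, FC_at, FV_at, pQ2; unfold_problem.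
  field_simplify_eq; [ring|auto].
Qed.

Lemma FV_at_1 g v : z_den g v <> 0 -> 1 + v <> 0 ->
  - FV_at 1 g (z_of_V8 g v) v * z_den g v = peval (centered 0 v g) pFV1 / 2.
Proof. intros H H'; unfold FV_at, pFV1; unfold_problem; field_simplify_eq; [ring|auto]. Qed.

Lemma FV_at_2 g v : z_den g v <> 0 -> 1 + v <> 0 ->
  - FV_at 2 g (z_of_V8 g v) v * z_den g v = peval (centered 0 v g) pFV2.
Proof. intros H H'; unfold FV_at, pFV2; unfold_problem; field_simplify_eq; [ring|auto]. Qed.

Lemma GC_at_neg M g v : (M = 1 \/ M = 2) -> 4943/2048 <= g <= 3 -> -645/2048 <= v < 0 ->
  GC_at M g (z_of_V8 g v) v < 0.
Proof.
  intros HM Hg Hv.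
  assert (HD : 0 < z_den g v) by (unfold z_den; nra).
  assert (E : GC_at M g (z_of_V8 g v) v * z_den g v
              = 2 * (1 + v) * v * (2 - v * ((M + 1) * (g - 2) + 2 * M))).
  { unfold GC_at, z_of_V8, z_den in *; field_simplify_eq; [ring|lra]. }
  assert (0 < 2 - v * ((M + 1) * (g - 2) + 2 * M)) by (destruct HM as [-> | ->]; nra).
  assert (2 * (1 + v) * v < 0) by nra.
  nra.
Qed.

(* A quadratic with negative constant term has a single negative root; it lies
   below every negative point where the quadratic is negative. *)
Lemma quadratic_neg_root_lt A B F c s : 0 < A -> F < 0 -> s < 0 -> c < 0 ->
  A * c ^ 2 + B * c + F = 0 -> A * s ^ 2 + B * s + F < 0 -> c < s.
Proof.
  intros HA HF Hs Hc Hroot Hneg; apply Rnot_le_lt; intro Hsc.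
  assert (E : s * (A * c ^ 2 + B * c + F) - c * (A * s ^ 2 + B * s + F) - (s - c) * F
              = A * c * s * (c - s)) by ring.
  rewrite Hroot in E.
  assert (0 <= A * (c * s) * (c - s)) by (apply Rmult_le_pos; [apply Rmult_le_pos|]; nra).
  assert (0 < - c * (A * s ^ 2 + B * s + F)) by nra.
  assert (0 <= - (s - c) * F) by nra.
  nra.
Qed.

Lemma neg_slope_lt_barrier_slope M g v c : (M = 1 \/ M = 2) -> 4943/2048 <= g <= 3 ->
  -645/2048 <= v < 0 -> V8 M g (z_of_V8 g v) = v -> is_neg_slope M g (z_of_V8 g v) c ->
  c < barrier_slope g.
Proof.
  intros HM Hg Hv H8 [Hc Hq].
  assert (HD : 0 < z_den g v) by (unfold z_den; nra).
  rewrite GC8_eq, GV8_eq, FC8_eq, FV8_eq, H8 in Hq by lra.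
  destruct (certificates_vg v g ltac:(lra) Hg) as (HQ1 & HQ2 & HF1 & HF2 & _).
  assert (Hqs : slope_quadratic M g (z_of_V8 g v) v (barrier_slope g) < 0).
  { destruct HM as [-> | ->].
    - pose proof (slope_quadratic_1 g v ltac:(lra) ltac:(lra)); nra.
    - pose proof (slope_quadratic_2 g v ltac:(lra) ltac:(lra)); nra. }
  assert (HF : FV_at M g (z_of_V8 g v) v < 0).
  { destruct HM as [-> | ->].
    - pose proof (FV_at_1 g v ltac:(lra) ltac:(lra)); nra.
    - pose proof (FV_at_2 g v ltac:(lra) ltac:(lra)); nra. }
  pose proof (GC_at_neg M g v HM Hg Hv).
  apply (quadratic_neg_root_lt (- GC_at M g (z_of_V8 g v) v)
           (FC_at M g (z_of_V8 g v) v - GV_at M g (z_of_V8 g v) v) (FV_at M g (z_of_V8 g v) v));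
    try assumption; unfold barrier_slope; lra.
Qed.

Lemma lt_sqrt_of_sq x y : 0 <= x -> x * x < y -> x < sqrt y.
Proof. intros Hx Hxy; rewrite <- (sqrt_square x) by exact Hx; apply sqrt_lt_1_alt; nra. Qed.

Lemma sqrt_lt_of_sq x y : 0 <= x -> 0 <= y -> y < x * x -> sqrt y < x.
Proof. intros Hx Hy Hxy; rewrite <- (sqrt_square x) by exact Hx; apply sqrt_lt_1_alt; nra. Qed.

Lemma gamma_z_bounds g z : gamma1 < g <= 3 -> 0 < z <= z2 g ->
  4943/2048 <= g /\ z * (17489/1000 + 4 * g) <= 274457/100000.
Proof.
  unfold gamma1, z2; intros Hg [Hz0 Hz].
  assert (2895/2048 < sqrt 2) by (apply lt_sqrt_of_sq; lra).
  assert (574456/100000 < sqrt 33) by (apply lt_sqrt_of_sq; lra).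
  assert (sqrt 33 < 574457/100000) by (apply sqrt_lt_of_sq; lra).
  apply Rmult_le_compat_r with (r := 6 + 2 * sqrt 33 + 4 * g) in Hz; [|lra].
  unfold Rdiv in Hz; rewrite Rmult_assoc, Rinv_l in Hz by lra.
  split; nra.
Qed.

Lemma V8_bounds M g z : 4943/2048 <= g <= 3 -> 0 < z ->
  z * (17489/1000 + 4 * g) <= 274457/100000 ->
  -645/2048 <= V8 M g z < 0 /\ z = z_of_V8 g (V8 M g z).
Proof.
  intros Hg Hz HzU.
  set (D := 1 - 2 * (g + 2) * z + (g - 2) ^ 2 * z ^ 2).
  assert (HD0 : 0 <= D) by (unfold D; nra).
  assert (Hw : wz M g z * wz M g z = D) by (apply sqrt_sqrt, HD0).
  assert (Hw0 : 0 <= wz M g z) by apply sqrt_pos.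
  unfold V8; set (w := wz M g z) in *.
  set (v := (-1 + (g - 2) * z + w) / 2).
  assert (Hroot : z * z_den g v = - v * (1 + v)) by (unfold z_den, v, D in *; nra).
  assert (Hv0 : v < 0).
  { assert (w * w < (1 - (g - 2) * z) * (1 - (g - 2) * z)) by (unfold D in Hw; nra).
    unfold v; nra. }
  assert (Hv1 : -645/2048 <= v).
  { set (r := 758/2048 - (g - 2) * z).
    assert (Hr : D - r * r = 1 - (758/2048) ^ 2 - z * (2 * (g + 2) - 2 * (758/2048) * (g - 2)))
      by (unfold D, r; ring).
    assert (r <= w) by (destruct (Rle_or_lt r 0); nra).
    unfold v, r in *; lra. }
  split; [lra|].
  unfold z_of_V8; apply Rmult_eq_reg_r with (z_den g v); [|unfold z_den; nra].
  rewrite Hroot; field; unfold z_den; nra.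
Qed.

Lemma barrier_line_V1_gt_C1 g v : 4943/2048 <= g <= 3 -> -645/2048 <= v <= 0 ->
  C1g g < barrier_line g v (V1g g).
Proof.
  intros Hg Hv.
  destruct (certificates_vg v g Hv Hg) as (_ & _ & _ & _ & HL & HL2).
  set (K := (1 + v) * (g + 1) + barrier_slope g * (-2 - v * (g + 1))).
  assert (EL : peval (centered 0 v g) pL / 50 = K)
    by (unfold K, pL, barrier_slope; unfold_peval; field).
  assert (EL2 : peval (centered 0 v g) pL2 / 2500 = K ^ 2 - 2 * g * (g - 1))
    by (unfold K, pL2, barrier_slope; unfold_peval; field).
  assert (Hline : barrier_line g v (V1g g) * (g + 1) = K)
    by (unfold barrier_line, V1g, K; field; lra).
  assert (sqrt (2 * g * (g - 1)) < K) by (apply sqrt_lt_of_sq; nra).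
  unfold C1g; apply Rmult_lt_reg_r with (g + 1); [lra|].
  unfold Rdiv; rewrite Rmult_assoc, Rinv_l, Hline by lra; lra.
Qed.

Lemma continuity_2d_pt_pow (f : R -> R -> R) n x y : continuity_2d_pt f x y ->
  continuity_2d_pt (fun u v => f u v ^ n) x y.
Proof.
  intro Hf; induction n as [|n IH]; simpl.
  - apply continuity_2d_pt_const.
  - exact (continuity_2d_pt_mult _ (fun u v => f u v ^ n) _ _ Hf IH).
Qed.

Ltac continuity_2d := repeat first
  [ apply continuity_2d_pt_plus | apply continuity_2d_pt_minus | apply continuity_2d_pt_mult
  | apply continuity_2d_pt_opp | apply continuity_2d_pt_inv | apply continuity_2d_pt_pow
  | apply continuity_2d_pt_id1 | apply continuity_2d_pt_id2 | apply continuity_2d_pt_const ].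

Lemma ode_slope_lt_at_right M g z s (C : R -> R) x :
  1 + x <> 0 -> filterlim C (at_right x) (locally (C x)) ->
  Gf M g z x (C x) < 0 -> 0 < Ff M g z x (C x) - s * Gf M g z x (C x) ->
  at_right x (fun y => Ff M g z y (C y) / Gf M g z y (C y) < s).
Proof.
  intros Hx HC HG HH.
  assert (HG' : at_right x (fun y => 0 < - Gf M g z y (C y))).
  { apply (at_right_pos_2d (fun u w => - Gf M g z u w)); [|exact HC|lra].
    unfold Gf, lam; continuity_2d. }
  assert (HH' : at_right x (fun y => 0 < Ff M g z y (C y) - s * Gf M g z y (C y))).
  { apply (at_right_pos_2d (fun u w => Ff M g z u w - s * Gf M g z u w)); [|exact HC|lra].
    unfold Ff, Gf, lam, a1, a2, a3, Rdiv; continuity_2d; simpl; lra. }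
  refine (filter_imp _ _ _ (filter_and _ _ HG' HH')); intros y [H1 H2].
  apply Rminus_lt.
  replace (Ff M g z y (C y) / Gf M g z y (C y) - s)
    with ((Ff M g z y (C y) - s * Gf M g z y (C y)) / Gf M g z y (C y)) by (field; lra).
  apply Rdiv_pos_neg; lra.
Qed.

Lemma solution_above_C1 m g z C : (m = 1 \/ m = 2)%nat -> gamma1 < g <= 3 -> 0 < z <= z2 g ->
  Sol (INR m) g z C -> C1g g < C (V1g g).
Proof.
  intros Hm Hg Hz HS.
  set (M := INR m).
  assert (HM : M = 1 \/ M = 2) by (unfold M; destruct Hm as [-> | ->]; simpl; lra).
  destruct (gamma_z_bounds g z Hg Hz) as [Hg0 HzU].
  assert (Hg3 : 4943/2048 <= g <= 3) by lra.
  destruct (V8_bounds M g z Hg3 ltac:(lra) HzU) as [Hv Hzv].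
  unfold Sol in HS; cbv zeta in HS; fold M in HS.
  set (v := V8 M g z) in *.
  destruct HS as [HV1v [(r & a & c & Hr & Hslope & Ha0 & Ha1 & Hex & His) [_ [Hder [Hlim _]]]]].
  set (s := barrier_slope g).
  assert (Hcs : a 1%nat < s).
  { rewrite Ha1; apply (neg_slope_lt_barrier_slope M g v c HM Hg3 Hv); rewrite <- Hzv;
      [reflexivity|exact Hslope]. }
  set (phi := fun V => C V - barrier_line g v V).
  assert (Hline : forall x, is_derive (barrier_line g v) x s)
    by (intro; unfold barrier_line; auto_derive; [exact I|unfold s; ring]).
  enough (0 < phi (V1g g))
    by (pose proof (barrier_line_V1_gt_C1 g v Hg3 ltac:(lra)); unfold phi in *; lra).
  apply (barrier phi (fun V => Ff M g z V (C V) / Gf M g z V (C V) - s) (V1g g) v HV1v).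
  - intros x Hx; exact (is_derive_minus _ _ _ _ _ (Hder x Hx) (Hline x)).
  - refine (filterlim_Rminus _ _ _ _ _ Hlim _).
    apply (continuous_at_right_left (barrier_line g v)).
    exact (ex_derive_continuous _ _ (ex_intro _ _ (Hline (V1g g)))).
  - destruct (pseries_above_line_left a C v r s Hr Hcs Hex His) as [d [Hd Habove]].
    exists (mkposreal d Hd); intros x Hx Hxv; apply ball_R in Hx; simpl in Hx.
    specialize (Habove x ltac:(lra)).
    rewrite Ha0 in Habove; unfold C8 in Habove; fold v in Habove.
    unfold phi, barrier_line; fold s; lra.
  - intros x Hx Hzero.
    pose proof (V1_gt_minus_one g ltac:(lra)).
    destruct (barrier_line_signs M g v x HM Hg3 Hv Hx) as [HG HH].
    rewrite <- Hzv in HG, HH; fold s in HH.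
    replace (barrier_line g v x) with (C x) in HG, HH by (unfold phi in Hzero; lra).
    assert (Hx1 : 1 + x <> 0) by lra.
    pose proof (ode_slope_lt_at_right M g z s C x Hx1
                  (barrier_at_right _ _ _ _ Hder Hlim x Hx) HG HH) as Hbelow.
    refine (filter_imp _ _ _ Hbelow); intros y Hy; lra.
Qed.

Theorem mainTheorem15 :
  forall (m : nat) (gamma : R),
    (m = 1%nat \/ m = 2%nat) ->
    gamma1 < gamma <= 3 ->
    (forall (z : R) (C : R -> R),
        0 < z <= z2 gamma ->
        Sol (INR m) gamma z C ->
        C (V1g gamma) > C1g gamma) /\
    (forall (z : R) (C : R -> R),
        0 < z <= zM gamma ->
        Sol (INR m) gamma z C ->
        C (V1g gamma) = C1g gamma ->
        z2 gamma < z <= zM gamma).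
Proof.
  intros m g Hm Hg; split.
  - intros z C Hz HS; exact (solution_above_C1 m g z C Hm Hg Hz HS).
  - intros z C Hz HS HC; split; [|apply Hz].
    apply Rnot_le_lt; intro Hle.
    pose proof (solution_above_C1 m g z C Hm Hg (conj (proj1 Hz) Hle) HS); lra.
Qed.
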